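(* For every (nonempty) composition $\alpha$, the monomial quasi-symmetric function $M_\alpha$ is irreducible both in $\mathrm{QSym}$ and in $K=\mathbb Z[[x_1,x_2,\dots]]$ (power series of bounded degree).
   Context: For a composition $\alpha=(\alpha_1,\dots,\alpha_k)$ (positive integers), $M_\alpha=\sum_{i_1<\dots<i_k}x_{i_1}^{\alpha_1}\cdots x_{i_k}^{\alpha_k}$. $\mathrm{QSym}\subseteq K$ is the ring of quasi-symmetric functions (bounded-degree series whose coefficient of $x_{i_1}^{a_1}\cdots x_{i_k}^{a_k}$ depends only on $(a_1,\dots,a_k)$ for $i_1<\dots<i_k$). The units of $K$ and of $\mathrm{QSym}$ are $\pm1$. *)

From mathcomp Require Import all_boot all_algebra.
Set Implicit Arguments. Unset Strict Implicit. Unset Printing Implicit Defensive.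
Import GRing.Theory.
Local Open Scope ring_scope.

(* A monomial x_1^{s_0} x_2^{s_1} ... is represented by its exponent list
   s : seq nat (trailing zeros allowed; s and rcons s 0 denote the same
   monomial). *)
Definition series := seq nat -> int.

Definition wf_series (f : series) : Prop := forall s, f (rcons s 0%N) = f s.

Definition bounded_deg (f : series) : Prop :=
  exists d : nat, forall s, (d < sumn s)%N -> f s = 0.

Definition inK (f : series) : Prop := wf_series f /\ bounded_deg f.

Fixpoint divs (s : seq nat) : seq (seq nat) :=
  match s with
  | [::] => [:: [::]]
  | a :: s' => [seq i :: t | i <- iota 0 a.+1, t <- divs s']
  end.

Definition subm (s t : seq nat) : seq nat := [seq (x.1 - x.2)%N | x <- zip s t].

Definition mulS (f g : series) : series :=
  fun s => \sum_(t <- divs s) f t * g (subm s t).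

Definition oneS : series := fun s => if sumn s == 0%N then 1 else 0.

Definition compo (s : seq nat) : seq nat := [seq a <- s | a != 0%N].

Definition quasisym (f : series) : Prop :=
  forall s t, compo s = compo t -> f s = f t.

Definition inQSym (f : series) : Prop := inK f /\ quasisym f.

Definition Mqs (alpha : seq nat) : series :=
  fun s => if compo s == alpha then 1 else 0.

Definition is_composition (alpha : seq nat) : bool :=
  (alpha != [::]) && all (fun a => 0 < a)%N alpha.

Definition unit_in (P : series -> Prop) (f : series) : Prop :=
  exists g, P g /\ forall s, mulS f g s = oneS s.

Definition irreducible_in (P : series -> Prop) (f : series) : Prop :=
  [/\ P f, (exists s, f s != 0), ~ unit_in P f &
      forall g h, P g -> P h -> (forall s, mulS g h s = f s) ->
        unit_in P g \/ unit_in P h].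

(* If g h = M_alpha in K, evaluate along lines: substituting integers for finitely
   many variables is a ring morphism on series of bounded degree, and any two nonzero
   series are both nonzero at some common integer point c.  The polynomials
   l |-> g(l c) and l |-> h(l c) then multiply to M_alpha(c) l^|alpha|, so they are
   monomials, and the degrees of the monomials of g and of h add up to |alpha|: g and h
   are homogeneous, of degrees a and b.
   Now take a prime p > k = length alpha and put x_1 = ... = x_k = X and
   x_(k+1) = ... = x_(k+p) = 1 over F_p.  Since p divides 'C(p, m) for 0 < m < p,
   M_alpha becomes X^|alpha|, so if a, b > 0 both factors vanish at X = 0: p divides
   g(0^k, 1^p) and h(0^k, 1^p), whose product M_alpha(0^k, 1^p) = 'C(p, k) is not
   divisible by p^2.  Hence one factor is a constant c, and evaluating at 1^k gives
   c * h(1^k) = M_alpha(1^k) = 1, so c = 1 or -1. *)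

From mathcomp Require Import all_boot all_algebra.
From mathcomp Require Import zify ring.
Set Implicit Arguments. Unset Strict Implicit. Unset Printing Implicit Defensive.
Import GRing.Theory Num.Theory.
Local Open Scope ring_scope.

(** * Arithmetic and polynomials *)

Lemma mem_leq_sumn s x : x \in s -> (x <= sumn s)%N.
Proof.
elim: s => //= y s IH; rewrite in_cons => /predU1P [->|/IH xs]; first exact: leq_addr.
exact: leq_trans xs (leq_addl _ _).
Qed.

Lemma int_unit_sqr (c x : int) : c * x = 1 -> c * c = 1.
Proof.
by rewrite mulrC => /intUnitRing.unitzPl; rewrite qualifE => /orP [] /eqP ->.
Qed.

Lemma sq_prime_ndvd_bin p k : prime p -> (0 < k < p)%N -> ~~ (p * p %| 'C(p, k))%N.
Proof.
move=> p_pr /andP [k0 kp]; apply/negP => pp_bin.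
have p0 := prime_gt0 p_pr.
have p_fact : (p %| (p.-1)`!)%N.
  have fact_p : (p`! = p * (p.-1)`!)%N by rewrite -{1}(prednK p0) factS prednK.
  by rewrite -(@dvdn_pmul2l p _ _ p0) -fact_p -(bin_fact (ltnW kp)) dvdn_mulr.
have := Wilson (prime_gt1 p_pr); rewrite p_pr -addn1 (dvdn_addr _ p_fact) dvdn1.
by move/esym/eqP => p1; rewrite p1 in p_pr.
Qed.

Lemma exists_nonroot (R : numDomainType) (P : {poly R}) :
  P != 0 -> exists x : R, P.[x] != 0.
Proof.
move=> nzP; pose rs := [seq i%:R : R | i <- iota 0 (size P)].
have [/hasP [x _ Px]|/hasPn rsP] := boolP (has (fun x => P.[x] != 0) rs).
  by exists x.
case/negP: nzP; apply/eqP/(@roots_geq_poly_eq0 _ _ rs).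
- by apply/allP => x /rsP; rewrite negbK.
- by rewrite map_inj_uniq ?iota_uniq //; apply: mulrIn; rewrite oner_eq0.
- by rewrite size_map size_iota.
Qed.

Lemma poly_horner_inj (R : numDomainType) (P Q : {poly R}) :
  (forall x, P.[x] = Q.[x]) -> P = Q.
Proof.
move=> PQ; apply/eqP; rewrite -subr_eq0; apply: contraT => /exists_nonroot [x].
by rewrite hornerD hornerN PQ subrr eqxx.
Qed.

Lemma coefM_lowest (R : nzRingType) (P Q : {poly R}) i j :
    (forall k, (k < i)%N -> P`_k = 0) -> (forall k, (k < j)%N -> Q`_k = 0) ->
  (P * Q)`_(i + j) = P`_i * Q`_j.
Proof.
move=> Pi Qj; have lti : (i < (i + j).+1)%N by lia.
rewrite coefM (bigD1 (Ordinal lti)) //= addKn big1 ?addr0 // => k ki.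
have [ltki|ltik|eqki] := ltngtP k i; first by rewrite Pi ?mul0r.
  by rewrite Qj ?mulr0 //; have := ltn_ord k; lia.
by case/eqP: ki; apply: val_inj.
Qed.

Lemma coef_neq0_size (R : nzSemiRingType) (P : {poly R}) i :
  P`_i != 0 -> (i < size P)%N.
Proof. by apply: contraR; rewrite -leqNgt => ?; rewrite nth_default. Qed.

Lemma coef_mul_eq_monomial (R : idomainType) (P Q : {poly R}) (C : R) n i j :
  P * Q = C%:P * 'X^n -> P`_i != 0 -> Q`_j != 0 -> (i + j = n)%N.
Proof.
move=> PQ Pi Qj.
(* Both the lowest and the highest nonzero coefficients of P * Q sit in degree n. *)
have nzP : P != 0 by apply: contraNneq Pi => ->; rewrite coef0.
have nzQ : Q != 0 by apply: contraNneq Qj => ->; rewrite coef0.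
have [i0 Pi0 mini0] := ex_minnP (ex_intro (fun k => P`_k != 0) i Pi).
have [j0 Qj0 minj0] := ex_minnP (ex_intro (fun k => Q`_k != 0) j Qj).
have low : (i0 + j0 = n)%N.
  have := mulf_neq0 Pi0 Qj0; rewrite -coefM_lowest => [|k|k].
  - by rewrite PQ coefCM coefXn; case: (i0 + j0 =P n)%N => // _; rewrite mulr0 eqxx.
  - by apply: contraTeq; rewrite -leqNgt; exact: mini0.
  - by apply: contraTeq; rewrite -leqNgt; exact: minj0.
have nzC : C != 0.
  by move: (mulf_neq0 nzP nzQ); apply: contraTneq => C0; rewrite PQ C0 mul0r eqxx.
have top : ((size P).-1 + (size Q).-1 = n)%N.
  have := size_mul nzP nzQ; rewrite PQ size_Cmul // size_polyXn.
  by have := size_poly_gt0 P; have := size_poly_gt0 Q; rewrite nzP nzQ; lia.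
have := coef_neq0_size Pi; have := coef_neq0_size Qj.
by have := mini0 _ Pi; have := minj0 _ Qj; lia.
Qed.

Lemma Xn_factor_coef0 (R : idomainType) (P Q : {poly R}) a b :
  P * Q = 'X^(a + b) -> (size Q <= b.+1)%N -> (0 < a)%N -> P`_0 = 0.
Proof.
move=> PQ szQ a0; apply/eqP; apply: contraT => P0.
have nzQ : Q != 0.
  apply/eqP => Q0; move: PQ; rewrite Q0 mulr0 => /eqP.
  by rewrite eq_sym -size_poly_eq0 size_polyXn.
have PQ1 : P * Q = 1%:P * 'X^(a + b) by rewrite polyC1 mul1r.
have lcQ : Q`_(size Q).-1 != 0 by rewrite -lead_coefE lead_coef_eq0.
by have := coef_mul_eq_monomial PQ1 P0 lcQ; lia.
Qed.

Lemma sum_trunc_cauchy (R : comNzRingType) D (x : R) (A B : nat -> R) :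
    (forall j l, (D < j + l)%N -> A j * B l = 0) ->
  \sum_(i < D.+1) x ^+ i * (\sum_(j < i.+1) A j * B (i - j)%N) =
  (\sum_(i < D.+1) x ^+ i * A i) * (\sum_(i < D.+1) x ^+ i * B i).
Proof.
move=> AB0; pose PA := \poly_(i < D.+1) A i; pose PB := \poly_(i < D.+1) B i.
have hornerP (C : nat -> R) : \sum_(i < D.+1) x ^+ i * C i = (\poly_(i < D.+1) C i).[x].
  by rewrite horner_poly; apply: eq_bigr => i _; rewrite mulrC.
rewrite !hornerP -hornerM.
have szAB : (size (PA * PB)%R <= D.+1)%N.
  apply/leq_sizeP => i Di; rewrite coefM big1 // => j _.
  rewrite !coef_poly; case: ifP => _; case: ifP => _; rewrite ?mul0r ?mulr0 //.
  by apply: AB0; have := ltn_ord j; lia.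
rewrite (horner_coef_wide x szAB); apply: eq_bigr => i _.
rewrite coefM mulrC; congr (_ * _); apply: eq_bigr => j _.
by rewrite !coef_poly !ifT //; have := ltn_ord i; have := ltn_ord j; lia.
Qed.

(** * Evaluation of series at points *)

Definition slice (f : series) (i : nat) : series := fun s => f (i :: s).

Definition deg_le (f : series) (d : nat) := forall s, (d < sumn s)%N -> f s = 0.

Definition homogeneous (f : series) (d : nat) := forall s, f s != 0 -> sumn s = d.

Definition hcomp (d : nat) (f : series) : series :=
  fun s => if sumn s == d then f s else 0.

Lemma deg_le_slice f d i : deg_le f d -> deg_le (slice f i) (d - i).
Proof. by move=> fd s lt; apply: fd => /=; lia. Qed.

Lemma slice_eq0 f d i : deg_le f d -> (d < i)%N -> slice f i =1 (fun=> 0).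
Proof. by move=> fd lt s; apply: fd => /=; lia. Qed.

Lemma homogeneous_deg_le f d : homogeneous f d -> deg_le f d.
Proof. by move=> fd s lt; apply/eqP; apply: contraT => /fd; lia. Qed.

Lemma homogeneous_hcomp d f : homogeneous (hcomp d f) d.
Proof. by move=> s; rewrite /hcomp; case: (sumn s =P d) => // _; rewrite eqxx. Qed.

Lemma wf_series_cat_nseq0 f s j : wf_series f -> f (s ++ nseq j 0%N) = f s.
Proof.
move=> wf; elim: j => [|j IH]; first by rewrite cats0.
by rewrite -addn1 nseqD catA cats1 wf.
Qed.

Lemma mulS_nil f g : mulS f g [::] = f [::] * g [::].
Proof. by rewrite /mulS /= big_seq1. Qed.

Lemma mulS_cons f g i s :
  mulS f g (i :: s) = \sum_(j < i.+1) mulS (slice f j) (slice g (i - j)) s.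
Proof.
rewrite /mulS (_ : divs _ = [seq j :: t | j <- iota 0 i.+1, t <- divs s]) //.
by rewrite big_allpairs_dep -(subn0 i.+1) -/(index_iota 0 i.+1) big_mkord.
Qed.

Section Evaluation.
Variable R : comNzRingType.

(* Substitution of [c] for x_1, ..., x_(size c) and 0 for the other variables,
   keeping only exponents <= D; exact on series of degree <= D. *)
Fixpoint evalS (D : nat) (c : seq R) (f : series) : R :=
  if c is x :: c' then \sum_(i < D.+1) x ^+ i * evalS D c' (slice f i)
  else (f [::])%:~R.

Lemma eq_evalS D c f g : f =1 g -> evalS D c f = evalS D c g.
Proof.
elim: c f g => [|x c IH] f g fg /=; first by rewrite fg.
by apply: eq_bigr => i _; rewrite (IH _ (slice g i)) // => s; apply: fg.
Qed.

Lemma evalS_eq0 D c f : f =1 (fun=> 0) -> evalS D c f = 0.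
Proof.
elim: c f => [|x c IH] f f0 /=; first by rewrite f0.
by apply: big1 => i _; rewrite IH ?mulr0 // => s; apply: f0.
Qed.

Lemma evalS_sum D c J (F : nat -> series) :
  evalS D c (fun s => \sum_(j < J) F j s) = \sum_(j < J) evalS D c (F j).
Proof.
elim: c F => [|x c IH] F /=; first by rewrite rmorph_sum.
rewrite exchange_big /=; apply: eq_bigr => i _.
by rewrite (IH (fun j => slice (F j) i)) mulr_sumr.
Qed.

Lemma evalS_cons D x c f :
  evalS D (x :: c) f = (\poly_(i < D.+1) evalS D c (slice f i)).[x].
Proof. by rewrite /= horner_poly; apply: eq_bigr => i _; rewrite mulrC. Qed.

Lemma evalS_mul D c f g df dg : deg_le f df -> deg_le g dg -> (df + dg <= D)%N ->
  evalS D c (mulS f g) = evalS D c f * evalS D c g.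
Proof.
elim: c f g df dg => [|x c IH] f g df dg fdf gdg dD /=.
  by rewrite mulS_nil rmorphM.
rewrite -(@sum_trunc_cauchy _ _ _ (fun j => evalS D c (slice f j))
                              (fun l => evalS D c (slice g l))) => [|j l lt].
  apply: eq_bigr => i _; congr (_ * _).
  rewrite (eq_evalS _ _ (mulS_cons f g i)).
  rewrite (evalS_sum _ _ _ (fun j => mulS (slice f j) (slice g (i - j)))).
  apply: eq_bigr => j _.
  apply: (IH _ _ (df - j)%N (dg - (i - j))%N); try exact: deg_le_slice.
  by have := ltn_ord j; lia.
rewrite /=; have [ltj|lej] := ltnP df j.
  by rewrite (evalS_eq0 _ _ (slice_eq0 fdf ltj)) mul0r.
by rewrite (@evalS_eq0 _ _ (slice g l)) ?mulr0 //; apply: slice_eq0 gdg _; lia.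
Qed.

Lemma evalS_mulS_eq D c f g e df dg : deg_le f df -> deg_le g dg -> (df + dg <= D)%N ->
  (forall s, mulS f g s = e s) -> evalS D c f * evalS D c g = evalS D c e.
Proof. by move=> fdf gdg dD fge; rewrite -(evalS_mul _ fdf gdg dD); apply: eq_evalS. Qed.

Lemma evalS_scale D c (l : R) f d : homogeneous f d ->
  evalS D [seq l * x | x <- c] f = l ^+ d * evalS D c f.
Proof.
elim: c f d => [|x c IH] f d fd /=.
  have [->|nz] := eqVneq (f [::]) 0; first by rewrite mulr0.
  by rewrite -(fd _ nz) expr0 mul1r.
rewrite mulr_sumr; apply: eq_bigr => i _.
have [lei|ltd] := leqP i d; last first.
  have fi0 := slice_eq0 (homogeneous_deg_le fd) ltd.
  by rewrite !(evalS_eq0 _ _ fi0) !mulr0.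
rewrite (IH _ (d - i)%N); last by move=> s /fd /=; lia.
by rewrite exprMn -{2}(subnK lei) exprD; ring.
Qed.

Lemma evalS_hcomp_sum D c f B : deg_le f B ->
  evalS D c f = \sum_(d < B.+1) evalS D c (hcomp d f).
Proof.
move=> fB; rewrite -(evalS_sum _ _ _ (hcomp^~ f)); apply: eq_evalS => s; rewrite /hcomp.
have [ltB|] := ltnP B (sumn s).
  by rewrite fB // big1 // => d _; case: eqP.
rewrite -ltnS => ltsB; rewrite (bigD1 (Ordinal ltsB)) //= eqxx big1 ?addr0 // => d nd.
case: (sumn s =P d) => // sd; case/eqP: nd; exact: val_inj.
Qed.

Lemma evalS_const D c f (a : int) :
  (forall s, f s = if sumn s == 0%N then a else 0) -> evalS D c f = a%:~R.
Proof.
elim: c f => [|x c IH] f fa /=; first by rewrite fa.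
rewrite big_ord_recl /= expr0 mul1r (IH _) => [|s]; last by rewrite /slice fa.
rewrite big1 ?addr0 // => i _; rewrite (@evalS_eq0 _ _ (slice f _)) ?mulr0 //.
by move=> s; rewrite /slice fa.
Qed.

End Evaluation.

Lemma compo_sumn s : sumn (compo s) = sumn s.
Proof. by elim: s => //= x s IH; rewrite /compo /=; case: x => //= x; rewrite -IH. Qed.

Lemma homogeneous_Mqs alpha : homogeneous (Mqs alpha) (sumn alpha).
Proof.
by move=> s; rewrite /Mqs; case: (compo s =P alpha) => // <- _; rewrite compo_sumn.
Qed.

Lemma compo_composition alpha : is_composition alpha -> compo alpha = alpha.
Proof. by case/andP => _ pos; apply/all_filterP; apply: sub_all pos => x; lia. Qed.

Lemma composition_parts_bounded alpha :
  is_composition alpha -> all (fun a => 0 < a <= sumn alpha)%N alpha.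
Proof. by case/andP => _ /allP pos; apply/allP => a aa; rewrite pos ?mem_leq_sumn. Qed.

Lemma inK_Mqs alpha : inK (Mqs alpha).
Proof.
split; first by move=> s; rewrite /Mqs /compo filter_rcons.
by exists (sumn alpha); apply: homogeneous_deg_le; apply: homogeneous_Mqs.
Qed.

Lemma inQSym_Mqs alpha : inQSym (Mqs alpha).
Proof. by split; [exact: inK_Mqs | move=> s t st; rewrite /Mqs st]. Qed.

Section EvaluationMqs.
Variables (R : comNzRingType) (D : nat).

Lemma evalS_Mqs_nil c : evalS D c (Mqs [::]) = 1 :> R.
Proof.
elim: c => [|x c IH] //=; rewrite big_ord_recl /= expr0 mul1r.
rewrite (eq_evalS _ _ (_ : slice (Mqs [::]) 0 =1 Mqs [::])) // IH big1 ?addr0 // => i _.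
by rewrite evalS_eq0 ?mulr0.
Qed.

Lemma evalS_Mqs_cons (x : R) c a alpha : (0 < a <= D)%N ->
  evalS D (x :: c) (Mqs (a :: alpha)) =
  evalS D c (Mqs (a :: alpha)) + x ^+ a * evalS D c (Mqs alpha).
Proof.
move=> aD /=; rewrite big_ord_recl /= expr0 mul1r.
have lta : (a.-1 < D)%N by lia.
rewrite (bigD1 (Ordinal lta)) //= big1 ?addr0 => [|i ia].
  rewrite /bump /= add1n prednK; last by lia.
  congr (_ + _ * _); apply: eq_evalS => s.
  have a0 : a != 0%N by lia.
  by rewrite /slice /Mqs /compo /= a0 eqseq_cons eqxx.
rewrite evalS_eq0 ?mulr0 // => s; rewrite /slice /Mqs /compo /= eqseq_cons.
rewrite /bump /= (_ : (1 + i == a)%N = false) //.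
by apply/eqP; move: ia; rewrite -val_eqE /=; lia.
Qed.

Definition bounded_parts (alpha : seq nat) := all (fun a => 0 < a <= D)%N alpha.

Lemma evalS_Mqs_ones q alpha : bounded_parts alpha ->
  evalS D (nseq q 1) (Mqs alpha) = 'C(q, size alpha)%:R :> R.
Proof.
elim: q alpha => [|q IH] [|a alpha] // Dalpha; first by rewrite evalS_Mqs_nil bin0.
case/andP: (Dalpha) => aD Dalpha'.
by rewrite [nseq _ _]/= evalS_Mqs_cons // !IH // expr1n mul1r binS natrD addrC.
Qed.

Lemma evalS_Mqs_zeros j c alpha : bounded_parts alpha ->
  evalS D (nseq j 0 ++ c) (Mqs alpha) = evalS D c (Mqs alpha) :> R.
Proof.
case: alpha => [|a alpha] Dalpha; first by rewrite !evalS_Mqs_nil.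
case/andP: (Dalpha) => aD _; elim: j => // j IH.
rewrite [nseq _ _ ++ _]/= evalS_Mqs_cons // IH expr0n.
by rewrite (_ : (a == 0%N) = false) ?mul0r ?addr0 //; lia.
Qed.

End EvaluationMqs.

Lemma evalS_rmorph (R S : comNzRingType) (phi : {rmorphism R -> S}) D c f :
  phi (evalS D c f) = evalS D (map phi c) f.
Proof.
elim: c f => [|x c IH] f /=; first by rewrite rmorph_int.
by rewrite rmorph_sum; apply: eq_bigr => i _; rewrite rmorphM rmorphXn IH.
Qed.

Lemma horner_evalS (R : comNzRingType) D (c : seq {poly R}) f x :
  (evalS D c f).[x] = evalS D [seq q.[x] | q <- c] f.
Proof. exact: (evalS_rmorph (horner_eval x)). Qed.

Lemma size_evalS (R : comNzRingType) D (c : seq {poly R}) f d :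
  all (fun p : {poly R} => size p <= 2)%N c -> deg_le f d ->
  (size (evalS D c f) <= d.+1)%N.
Proof.
elim: c f d => [|p c IH] f d /= => [_ _|/andP [p2 c2] fd].
  by rewrite -(rmorph_int polyC) (leq_trans (size_polyC_leq1 _)).
apply: (leq_trans (size_sum _ _ _)); apply/bigmax_leqP => i _; move: (nat_of_ord i) => {}i.
have [lei|ltd] := leqP i d; last first.
  by rewrite (evalS_eq0 _ _ (slice_eq0 fd ltd)) mulr0 size_poly0.
apply: leq_trans (size_polyMleq _ _) _.
have szpi : (size (p ^+ i) <= i.+1)%N.
  apply: leq_trans (size_poly_exp_leq p i) _.
  by rewrite ltnS -[X in (_ <= X)%N]mul1n leq_mul2r -subn1 leq_subLR p2 orbT.
have := IH _ _ c2 (@deg_le_slice f d i fd).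
set a := size (p ^+ i) in szpi *; set b := size (evalS D c (slice f i)); lia.
Qed.

Lemma evalS_common_nonzero (R : numDomainType) D (f g : series) s t :
    size s = size t -> all (fun a => a <= D)%N s -> all (fun a => a <= D)%N t ->
    f s != 0 -> g t != 0 ->
  exists c : seq R, evalS D c f != 0 /\ evalS D c g != 0.
Proof.
elim: s t f g => [|i s IH] [|j t] //= f g.
  by move=> _ _ _ fs gt; exists [::]; rewrite /= !intr_eq0.
move=> [st] /andP [iD sD] /andP [jD tD] fs gt.
have [c [fc gc]] := IH t (slice f i) (slice g j) st sD tD fs gt.
pose Pf := \poly_(k < D.+1) evalS D c (slice f k).
pose Pg := \poly_(k < D.+1) evalS D c (slice g k).
have Pfi : Pf`_i = evalS D c (slice f i) by rewrite coef_poly ltnS iD.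
have Pgj : Pg`_j = evalS D c (slice g j) by rewrite coef_poly ltnS jD.
have nzPf : Pf != 0 by apply: contraNneq fc => Pf0; rewrite -Pfi Pf0 coef0.
have nzPg : Pg != 0 by apply: contraNneq gc => Pg0; rewrite -Pgj Pg0 coef0.
have [x] := exists_nonroot (mulf_neq0 nzPf nzPg).
by rewrite hornerM mulf_eq0 negb_or -!evalS_cons => /andP [fx gx]; exists (x :: c).
Qed.

(** * Homogeneity of the factors *)

Definition radial D (c : seq int) (f : series) : {poly int} :=
  \poly_(d < D.+1) evalS D c (hcomp d f).

Lemma horner_radial D c f l : deg_le f D ->
  (radial D c f).[l] = evalS D [seq l * x | x <- c] f.
Proof.
move=> fD; rewrite horner_poly (evalS_hcomp_sum _ _ fD); apply: eq_bigr => d _.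
by rewrite (evalS_scale _ _ _ (@homogeneous_hcomp d f)) mulrC.
Qed.

Lemma factor_degrees alpha g h dg dh : deg_le g dg -> deg_le h dh ->
    (forall s, mulS g h s = Mqs alpha s) ->
  forall s t, size s = size t -> g s != 0 -> h t != 0 ->
  (sumn s + sumn t = sumn alpha)%N.
Proof.
move=> gdg hdh gh s t st gs ht; set D := (dg + dh)%N.
have sg : (sumn s <= dg)%N by rewrite leqNgt; apply: contra gs => /gdg ->.
have th : (sumn t <= dh)%N by rewrite leqNgt; apply: contra ht => /hdh ->.
have bounded u : (sumn u <= D)%N -> all (fun a => a <= D)%N u.
  by move=> uD; apply/allP => a /mem_leq_sumn/leq_trans; apply.
have gs' : hcomp (sumn s) g s != 0 by rewrite /hcomp eqxx.
have ht' : hcomp (sumn t) h t != 0 by rewrite /hcomp eqxx.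
have [c []] := evalS_common_nonzero int st (bounded s (leq_trans sg (leq_addr _ _)))
  (bounded t (leq_trans th (leq_addl _ _))) gs' ht'.
have gD : deg_le g D by move=> u ltu; apply: gdg; lia.
have hD : deg_le h D by move=> u ltu; apply: hdh; lia.
have radialM : radial D c g * radial D c h = (evalS D c (Mqs alpha))%:P * 'X^(sumn alpha).
  apply: poly_horner_inj => l.
  rewrite hornerM !horner_radial // (evalS_mulS_eq _ gdg hdh (leqnn _) gh).
  by rewrite hornerCM hornerXn (evalS_scale _ _ _ (@homogeneous_Mqs alpha)) mulrC.
move=> gc hc; apply: (coef_mul_eq_monomial radialM); rewrite coef_poly ltnS.
  by rewrite ifT //; lia.
by rewrite ifT //; lia.
Qed.

Lemma homogeneous_factors alpha g h : is_composition alpha -> inK g -> inK h ->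
    (forall s, mulS g h s = Mqs alpha s) ->
  exists a b, [/\ homogeneous g a, homogeneous h b & (a + b = sumn alpha)%N].
Proof.
move=> ac [wg [dg gdg]] [wh [dh hdh]] gh.
have deg_sum s t : g s != 0 -> h t != 0 -> (sumn s + sumn t = sumn alpha)%N.
  pose N := maxn (size s) (size t).
  rewrite -(wf_series_cat_nseq0 s (N - size s) wg).
  rewrite -(wf_series_cat_nseq0 t (N - size t) wh) => gs ht.
  rewrite -(factor_degrees gdg hdh gh _ gs ht); last by rewrite !size_cat !size_nseq; lia.
  by rewrite !sumn_cat !sumn_nseq !mul0n !addn0.
have [u gu hu] : exists2 u, g u != 0 & h (subm alpha u) != 0.
  have nz : mulS g h alpha != 0 by rewrite gh /Mqs compo_composition // eqxx.
  have : has (fun u => g u * h (subm alpha u) != 0) (divs alpha).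
    apply: contraNT nz => /hasPn zero; rewrite /mulS big1_seq // => u /andP [_ /zero].
    by rewrite negbK => /eqP.
  by case/hasP => u _; rewrite mulf_eq0 negb_or => /andP [gu hu]; exists u.
exists (sumn u), (sumn (subm alpha u)); split; last exact: deg_sum.
  by move=> s gs; have := deg_sum _ _ gs hu; have := deg_sum _ _ gu hu; lia.
by move=> t ht; have := deg_sum _ _ gu ht; have := deg_sum _ _ gu hu; lia.
Qed.

(** * Reduction modulo a prime *)

Lemma evalS_Mqs_X_ones p D j alpha :
  prime p -> bounded_parts D alpha -> (size alpha < p)%N ->
  evalS D (nseq j 'X ++ nseq p 1 : seq {poly 'F_p}) (Mqs alpha) =
  'C(j, size alpha)%:R * 'X^(sumn alpha).
Proof.
move=> p_pr; elim: j alpha => [|j IH] alpha Dalpha ltp.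
  rewrite [nseq 0 _ ++ _]/= evalS_Mqs_ones //.
  case: alpha Dalpha ltp => [|a alpha] Dalpha ltp; first by rewrite bin0 mulr1.
  have pchar_p : p \in [pchar {poly 'F_p}] by rewrite pchar_poly pchar_Fp.
  by rewrite bin0n mul0r; apply/eqP; rewrite -(dvdn_pcharf pchar_p) prime_dvd_bin.
case: alpha Dalpha ltp => [|a alpha] Dalpha ltp.
  by rewrite evalS_Mqs_nil bin0 mulr1.
case/andP: (Dalpha) => aD Dalpha'.
rewrite [nseq _ _ ++ _]/= evalS_Mqs_cons // !IH //; last by rewrite /= in ltp; lia.
by rewrite /= binS natrD exprD; ring.
Qed.

Section PrimeSpecialization.
Variables (p : nat) (alpha : seq nat) (g h : series) (a b : nat).
Hypotheses (p_pr : prime p) (ltkp : (size alpha < p)%N) (ac : is_composition alpha).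
Hypotheses (ga : homogeneous g a) (hb : homogeneous h b) (ab : (a + b = sumn alpha)%N).
Hypothesis gh : forall s, mulS g h s = Mqs alpha s.

Let n := sumn alpha.
Let k := size alpha.
Let c0 : seq int := nseq k 0 ++ nseq p 1.

Let Dalpha : bounded_parts n alpha.
Proof. exact: composition_parts_bounded. Qed.

Let evalS_gh (R : comNzRingType) (c : seq R) :=
  evalS_mulS_eq c (homogeneous_deg_le ga) (homogeneous_deg_le hb) (eq_leq ab) gh.

Lemma Mqs_factors_dvd_mod_p : (0 < a)%N -> (0 < b)%N ->
  (p %| evalS n c0 g)%Z /\ (p %| evalS n c0 h)%Z.
Proof.
move=> a0 b0; pose cX : seq {poly 'F_p} := nseq k 'X ++ nseq p 1.
have cX2 : all (fun q : {poly 'F_p} => size q <= 2)%N cX.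
  by rewrite all_cat !all_nseq size_polyX size_poly1 !orbT.
have GH : evalS n cX g * evalS n cX h = 'X^(a + b).
  by rewrite evalS_gh evalS_Mqs_X_ones // binn mul1r ab.
have p_dvd f : (evalS n cX f)`_0 = 0 -> (p %| evalS n c0 f)%Z.
  rewrite -horner_coef0 horner_evalS (dvdz_pcharf (pchar_Fp p_pr)) evalS_rmorph => <-.
  by apply/eqP; congr evalS; rewrite !map_cat !map_nseq /= hornerX hornerC rmorph0 rmorph1.
split; apply: p_dvd.
  exact: Xn_factor_coef0 GH (size_evalS _ cX2 (homogeneous_deg_le hb)) a0.
rewrite addnC mulrC in GH.
exact: Xn_factor_coef0 GH (size_evalS _ cX2 (homogeneous_deg_le ga)) b0.
Qed.

Lemma Mqs_factor_degree0 : a = 0%N \/ b = 0%N.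
Proof.
have [->|a0] := posnP a; first by left.
have [->|b0] := posnP b; first by right.
have [pg ph] := Mqs_factors_dvd_mod_p a0 b0.
have : (p * p %| 'C(p, k))%N.
  move: (dvdz_mul pg ph).
  by rewrite evalS_gh evalS_Mqs_zeros // evalS_Mqs_ones // natz -PoszM.
have k0 : (0 < k)%N by case/andP: ac; rewrite /k; case: (alpha).
by rewrite (negPf (sq_prime_ndvd_bin p_pr _)) // k0.
Qed.

End PrimeSpecialization.

Lemma homogeneous0_const f : wf_series f -> homogeneous f 0 ->
  forall s, f s = if sumn s == 0%N then f [::] else 0.
Proof.
move=> wf f0 s; case: ifP => [/natnseq0P ->|/negbT s0].
  exact: (wf_series_cat_nseq0 [::] (size s) wf).
by apply/eqP; apply: contraNT s0 => /f0 ->.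
Qed.

Lemma divs_sum_sumn0 (F : seq nat -> int) s :
  \sum_(t <- divs s) (if sumn t == 0%N then F t else 0) = F (nseq (size s) 0%N).
Proof.
elim: s F => [|x s IH] F; first by rewrite /= big_seq1.
rewrite (_ : divs _ = [seq j :: t | j <- iota 0 x.+1, t <- divs s]) //.
rewrite big_allpairs_dep /= big_cons (IH (fun t => F (0%N :: t))) big1_seq ?addr0 //.
move=> j /andP [_]; rewrite mem_iota => /andP [j0 _]; rewrite big1 // => t _.
by rewrite ifF //; apply/negbTE; rewrite -lt0n addn_gt0 j0.
Qed.

Lemma subm_nseq0 s : subm s (nseq (size s) 0%N) = s.
Proof. by elim: s => //= x s IH; rewrite /subm /= subn0; congr (_ :: _). Qed.

Lemma mulS_constl f g (c : int) :
  (forall s, f s = if sumn s == 0%N then c else 0) -> forall s, mulS f g s = c * g s.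
Proof.
move=> fc s; rewrite /mulS.
rewrite (eq_bigr (fun t => if sumn t == 0%N then c * g (subm s t) else 0)).
  by rewrite divs_sum_sumn0 subm_nseq0.
by move=> t _; rewrite fc; case: ifP; rewrite ?mul0r.
Qed.

Lemma Mqs_factor_unit (P : series -> Prop) alpha g h : is_composition alpha ->
    (forall f, P f -> inK f) -> P g -> P h ->
    (forall s, mulS g h s = Mqs alpha s) ->
  unit_in P g \/ unit_in P h.
Proof.
move=> ac PK Pg Ph gh.
have [a [b [ga hb ab]]] := homogeneous_factors ac (PK _ Pg) (PK _ Ph) gh.
set n := sumn alpha; pose c1 : seq int := nseq (size alpha) 1.
have Dalpha : bounded_parts n alpha by apply: composition_parts_bounded.
have evalS_gh : evalS n c1 g * evalS n c1 h = 1.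
  rewrite (evalS_mulS_eq c1 (homogeneous_deg_le ga) (homogeneous_deg_le hb) (eq_leq ab) gh).
  by rewrite evalS_Mqs_ones ?binn.
have unit_deg0 f x : P f -> homogeneous f 0 -> evalS n c1 f * x = 1 -> unit_in P f.
  move=> Pf fd.
  have fc := homogeneous0_const (PK _ Pf).1 fd.
  rewrite (evalS_const _ _ fc) intz => /int_unit_sqr f2.
  exists f; split=> // s.
  by rewrite (mulS_constl _ fc) (fc s) /oneS; case: ifP; rewrite ?mulr0.
have [p ltkp p_pr] := prime_above (size alpha).
have [a0|b0] := Mqs_factor_degree0 p_pr ltkp ac ga hb ab gh.
  by rewrite a0 in ga; left; apply: unit_deg0 evalS_gh.
by rewrite b0 mulrC in hb evalS_gh; right; apply: unit_deg0 evalS_gh.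
Qed.

Lemma irreducible_in_Mqs (P : series -> Prop) alpha : is_composition alpha ->
  (forall f, P f -> inK f) -> P (Mqs alpha) -> irreducible_in P (Mqs alpha).
Proof.
move=> ac PK PM; split => //.
- by exists alpha; rewrite /Mqs compo_composition // eqxx.
- have alpha0 : ([::] == alpha) = false by case/andP: ac; rewrite eq_sym => /negbTE.
  by case=> g [_ /(_ [::])]; rewrite mulS_nil /Mqs /oneS /= alpha0 mul0r.
- by move=> g h Pg Ph; apply: Mqs_factor_unit.
Qed.

Theorem proposition8p10 (alpha : seq nat) :
  is_composition alpha ->
  irreducible_in inQSym (Mqs alpha) /\ irreducible_in inK (Mqs alpha).
Proof.
move=> ac; split; apply: irreducible_in_Mqs => //.
- by move=> f [].
- exact: inQSym_Mqs.
- exact: inK_Mqs.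
Qed.
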